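(* Let $k\ge2$ and $n\le-(k-1)$. Then $$\mathcal{F}_{n,k}(x)=\sum_{t=0}^{\lfloor(|n|+1-k)/k\rfloor}C_k\bigl(-(1+t),\,|n|+1-k(1+t)\bigr)\,x^{|n|+1-k(1+t)}.$$
   Context: For $k\ge2$, the polynomials $\mathcal{F}_{n,k}(x)\in\mathbb{Z}[x]$ ($n\in\mathbb{Z}$) are defined by $\mathcal{F}_{1,k}=1$, $\mathcal{F}_{n,k}=0$ for $n=0,-1,\dots,-(k-2)$, and $\mathcal{F}_{n,k}(x)=\sum_{j=1}^{k}x^{k-j}\mathcal{F}_{n-j,k}(x)$ for all $n\in\mathbb{Z}$. This recurrence is used upwards for $n\ge2$, and downwards for $n\le-(k-1)$ as $\mathcal{F}_{n,k}=\mathcal{F}_{n+k,k}-\sum_{j=1}^{k-1}x^j\mathcal{F}_{n+j,k}$. For integers $m<0$ and $j\ge0$, $C_k(m,j)$ denotes the coefficient of $x^j$ in the formal power series $(1+x+\dots+x^{k-1})^{m}=1/(1+x+\dots+x^{k-1})^{|m|}$. *)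

From HB Require Import structures.
From mathcomp Require Import all_boot all_order all_algebra.
Set Implicit Arguments. Unset Strict Implicit. Unset Printing Implicit Defensive.
Import Order.TTheory GRing.Theory Num.Theory.
Local Open Scope ring_scope.

Definition Pk (k : nat) : {poly int} := \sum_(i < k) 'X^i.

(* Coefficients 0..n of the formal power series 1/p, for p with p`_0 = 1:
   b_0 = 1, b_m = - sum_{i=1}^m p_i b_(m-i). *)
Fixpoint ser_inv_seq (p : {poly int}) (n : nat) : seq int :=
  match n with
  | 0 => [:: 1]
  | n'.+1 => let s := ser_inv_seq p n' in
      rcons s (- \sum_(1 <= i < n'.+2) p`_i * s`_(n'.+1 - i))
  end.

Definition ser_inv_trunc (p : {poly int}) (n : nat) : {poly int} :=
  Poly (ser_inv_seq p n).

(* C_k(m,j) = coefficient of x^j in (1+x+...+x^(k-1))^m = 1/(1+...+x^(k-1))^|m|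
   (m < 0): computed from the truncation to degree j of 1/P_k, raised to |m|. *)
Definition Ck (k : nat) (m : int) (j : nat) : int :=
  ((ser_inv_trunc (Pk k) j) ^+ `|m|%N)`_j.

From HB Require Import structures.
From mathcomp Require Import zify all_boot all_order all_algebra.
Import Order.TTheory GRing.Theory Num.Theory.
Local Open Scope ring_scope.

(* Put G_N := F_{1-N}.  Read backwards, the recurrence says
   sum_{i<k} x^i G_{N-i} = G_{N-k} for N >= k, with G_0 = 1 and G_N = 0 for
   0 < N < k.  Writing C(s, e) for the coefficient of x^e in P_k^{-s},
   the identity P_k * P_k^{-(s+1)} = P_k^{-s} shows that the numbers
   h(N, e) := C((N-e)/k, e) when k | N - e (and 0 otherwise) satisfy the same
   recurrence and initial values, hence are the coefficients of G_N.  The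
   s = 0 term never contributes for N >= k, which leaves the sum over
   t = s - 1 of the theorem. *)

Lemma size_ser_inv_seq p n : size (ser_inv_seq p n) = n.+1.
Proof. by elim: n => [|n IH] //=; rewrite size_rcons IH. Qed.

Lemma nth_ser_inv_seq_addn p n d i : (i <= n)%N ->
  (ser_inv_seq p (n + d))`_i = (ser_inv_seq p n)`_i.
Proof.
move=> le_in; elim: d => [|d IH]; first by rewrite addn0.
by rewrite addnS /= nth_rcons size_ser_inv_seq ifT ?IH //; lia.
Qed.

Definition ser_inv_coef (p : {poly int}) i := (ser_inv_seq p i)`_i.

Lemma nth_ser_inv_seq p m i : (i <= m)%N -> (ser_inv_seq p m)`_i = ser_inv_coef p i.
Proof. by move=> le_im; rewrite -(subnKC le_im) nth_ser_inv_seq_addn. Qed.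

Lemma ser_inv_coefS (p : {poly int}) j :
  ser_inv_coef p j.+1 = - \sum_(i < j.+1) p`_i.+1 * ser_inv_coef p (j - i).
Proof.
rewrite /ser_inv_coef /= nth_rcons size_ser_inv_seq ltnn eqxx; congr (- _).
rewrite big_add1 /= big_mkord; apply: eq_bigr => i _.
by rewrite subSS nth_ser_inv_seq //; lia.
Qed.

Lemma ser_inv_coef_conv (p : {poly int}) j : p`_0 = 1 ->
  \sum_(i < j.+1) p`_i * ser_inv_coef p (j - i) = (j == 0)%:R.
Proof.
move=> p0; case: j => [|j]; first by rewrite big_ord1 p0 mul1r.
by rewrite big_ord_recl p0 mul1r subn0 ser_inv_coefS addNr.
Qed.

Lemma coef_ser_inv_trunc p N i : (i <= N)%N ->
  (ser_inv_trunc p N)`_i = ser_inv_coef p i.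
Proof. by move=> le_iN; rewrite coef_Poly nth_ser_inv_seq. Qed.

Lemma coef_mul_ser_inv_trunc (p : {poly int}) N a : p`_0 = 1 -> (a <= N)%N ->
  (p * ser_inv_trunc p N)`_a = (a == 0)%:R.
Proof.
move=> p0 le_aN; rewrite coefM -(@ser_inv_coef_conv p a p0).
by apply: eq_bigr => i _; rewrite coef_ser_inv_trunc //; lia.
Qed.

Lemma coef_exprn_eq (R : nzRingType) (A B : {poly R}) J :
  (forall i, (i <= J)%N -> A`_i = B`_i) ->
  forall s j, (j <= J)%N -> (A ^+ s)`_j = (B ^+ s)`_j.
Proof.
move=> eqAB; elim=> [|s IH] j le_jJ; first by rewrite !expr0.
rewrite !exprS !coefM; apply: eq_bigr => i _.
by rewrite eqAB ?IH //; have := ltn_ord i; lia.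
Qed.

Definition ser_inv_expn_coef (p : {poly int}) s j :=
  ((ser_inv_trunc p j) ^+ s)`_j.

Lemma ser_inv_expn_coefE p s j N : (j <= N)%N ->
  ser_inv_expn_coef p s j = ((ser_inv_trunc p N) ^+ s)`_j.
Proof.
move=> le_jN; apply: (@coef_exprn_eq _ _ _ j) => // i le_ij.
by rewrite !coef_ser_inv_trunc //; lia.
Qed.

Lemma ser_inv_expn_coef0 p j : ser_inv_expn_coef p 0 j = (j == 0)%:R.
Proof. by rewrite /ser_inv_expn_coef expr0 coef1. Qed.

Lemma coef_mul_ser_inv_trunc_exprS (p : {poly int}) s N e :
  p`_0 = 1 -> (e <= N)%N ->
  (p * ser_inv_trunc p N ^+ s.+1)`_e = (ser_inv_trunc p N ^+ s)`_e.
Proof.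
move=> p0 le_eN; rewrite exprS mulrA coefM big_ord_recl.
rewrite coef_mul_ser_inv_trunc // mul1r subn0 big1 ?addr0 // => i _.
rewrite lift0 coef_mul_ser_inv_trunc ?mul0r //; have := ltn_ord i; lia.
Qed.

Lemma coef_Pk k i : (Pk k)`_i = (i < k)%:R.
Proof.
elim: k => [|k IH]; first by rewrite /Pk big_ord0 coef0.
rewrite /Pk big_ord_recr /= -/(Pk k) coefD IH coefXn.
case: (ltngtP i k) => [lt_ik|lt_ki|->].
- by rewrite ltnS (ltnW lt_ik) addr0.
- by rewrite ltnS leqNgt lt_ki addr0.
- by rewrite ltnSn add0r.
Qed.

Lemma Ck_ser_inv_expn_coef k s j : Ck k (- s%:Z) j = ser_inv_expn_coef (Pk k) s j.
Proof. by rewrite /Ck /ser_inv_expn_coef abszN absz_nat. Qed.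

(* Coefficientwise form of P_k * P_k^{-(s+1)} = P_k^{-s}. *)
Lemma ser_inv_expn_coef_Pk_conv k s e : (0 < k)%N ->
  \sum_(i < k) (if (e < i)%N then 0 else ser_inv_expn_coef (Pk k) s.+1 (e - i))
  = ser_inv_expn_coef (Pk k) s e.
Proof.
move=> k_gt0; have Pk0 : (Pk k)`_0 = 1 by rewrite coef_Pk k_gt0.
rewrite (@ser_inv_expn_coefE _ s e e (leqnn e)).
rewrite -(@coef_mul_ser_inv_trunc_exprS _ s e e Pk0 (leqnn e)).
rewrite {2}/Pk mulr_suml coef_sum; apply: eq_bigr => i _; rewrite coefXnM.
by case: ifP => // lt_ei; rewrite (ser_inv_expn_coefE _ _ _ _ (leq_subr i e)).
Qed.

Definition Fk_coef k N e : int :=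
  if (e <= N)%N && (k %| N - e)%N
  then ser_inv_expn_coef (Pk k) ((N - e) %/ k) e else 0.

Lemma Fk_coef_small k N e : (N < k)%N -> Fk_coef k N e = ((N == 0) && (e == 0))%:R.
Proof.
rewrite /Fk_coef => lt_Nk; case: ifP => [/andP [le_eN dvd_k] | cond].
  case: (posnP (N - e)) => [Ne0 | /dvdn_leq/(_ dvd_k)]; last by lia.
  by rewrite Ne0 div0n ser_inv_expn_coef0 (_ : N = e) ?andbb //; lia.
by case: eqP => [N0|]; case: eqP => [e0|] //; rewrite N0 e0 dvdn0 in cond.
Qed.

Lemma Fk_coef_sub k N e i : (i <= e)%N -> (i <= N)%N ->
  Fk_coef k (N - i) (e - i) =
  if (e <= N)%N && (k %| N - e)%N
  then ser_inv_expn_coef (Pk k) ((N - e) %/ k) (e - i) else 0.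
Proof.
move=> le_ie le_iN; rewrite /Fk_coef leq_sub2rE //.
by have -> : (N - i - (e - i) = N - e)%N by lia.
Qed.

Lemma Fk_coef_rec k N e : (0 < k)%N -> (k <= N)%N ->
  \sum_(i < k) (if (e < i)%N then 0 else Fk_coef k (N - i) (e - i))
  = Fk_coef k (N - k) e.
Proof.
move=> k_gt0 le_kN; set c := ser_inv_expn_coef (Pk k).
transitivity (if (e <= N)%N && (k %| N - e)%N
  then \sum_(i < k) (if (e < i)%N then 0 else c ((N - e) %/ k)%N (e - i)%N) else 0).
  case: ifP => cond; [apply: eq_bigr | apply: big1] => i _;
    case: ltnP => // le_ie; rewrite Fk_coef_sub ?cond //; have := ltn_ord i; lia.
rewrite /Fk_coef; case: ifP => [/andP [le_eN /divnK Ne] | cond].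
  move: Ne; case: ((N - e) %/ k)%N => [|s] Ne.
    rewrite big1 => [|i _]; last first.
      case: ltnP => // le_ie; rewrite /c ser_inv_expn_coef0.
      by case: eqP => //; have := ltn_ord i; lia.
    by rewrite (_ : (e <= N - k)%N = false) //; apply/negbTE; rewrite -ltnNge; lia.
  rewrite ser_inv_expn_coef_Pk_conv //.
  have -> : (N - k - e = s * k)%N by lia.
  by rewrite (_ : (e <= N - k)%N) ?dvdn_mull ?mulnK //; lia.
case: ifP => // /andP [le_eNk dvd_k]; move: cond.
have -> : (N - e = N - k - e + k)%N by lia.
by rewrite dvdn_addl // dvd_k andbT (_ : (e <= N)%N) //; lia.
Qed.

Section NegativeIndices.

Variables (k : nat) (F : int -> {poly int}).
Hypothesis k_ge2 : (2 <= k)%N.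
Hypothesis F1 : F 1 = 1.
Hypothesis F_init : forall n : int, 2 - k%:Z <= n <= 0 -> F n = 0.
Hypothesis F_rec :
  forall n : int, F n = \sum_(1 <= j < k.+1) 'X^(k - j) * F (n - j%:Z).

Lemma F_rec_backward N : (k <= N)%N ->
  \sum_(i < k) 'X^i * F (1 - (N - i)%:Z) = F (1 - (N - k)%:Z).
Proof.
move=> le_kN; rewrite [RHS]F_rec big_add1 /= big_mkord.
rewrite [LHS](reindex_inj rev_ord_inj); apply: eq_bigr => i _ /=.
by congr (_ * F _); have := ltn_ord i; lia.
Qed.

Lemma coef_F_neg N e : (F (1 - N%:Z))`_e = Fk_coef k N e.
Proof.
have k_gt0 : (0 < k)%N by lia.
elim/ltn_ind: N e => N IH e.
case: (ltnP N k) => [lt_Nk | le_kN].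
  rewrite Fk_coef_small //; case: (posnP N) => [-> | N_gt0].
    by rewrite subr0 F1 coef1.
  by rewrite F_init ?coef0 ?(gtn_eqF N_gt0) //; apply/andP; split; lia.
move: (F_rec_backward N le_kN) => /(congr1 (fun p : {poly int} => p`_e)).
rewrite coef_sum (IH (N - k)%N); last by lia.
rewrite -(Fk_coef_rec _ _ e k_gt0 le_kN).
under eq_bigr do rewrite coefXnM.
rewrite (bigD1 (Ordinal k_gt0)) // [X in _ = X](bigD1 (Ordinal k_gt0)) //=.
rewrite !subn0 (eq_bigr (fun i : 'I_k => if (e < i)%N then 0 else Fk_coef k (N - i) (e - i))).
  by move/addIr.
move=> i; rewrite -val_eqE /= -lt0n => i_gt0; case: ifP => // _.
by rewrite IH //; lia.
Qed.

End NegativeIndices.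

Lemma coef_sum_Ck k N e : (0 < k)%N -> (k <= N)%N ->
  (\sum_(t < ((N - k) %/ k).+1)
     Ck k (- (1 + t)%:Z) (N - k * (1 + t))%N *: 'X^(N - k * (1 + t)))`_e
  = Fk_coef k N e.
Proof.
move=> k_gt0 le_kN; rewrite coef_sum.
under eq_bigr do rewrite coefZ coefXn Ck_ser_inv_expn_coef.
rewrite /Fk_coef; case: ifP => [/andP [le_eN /divnK Ne] | cond].
  move: Ne; case: ((N - e) %/ k)%N => [|s] Ne.
    rewrite ser_inv_expn_coef0 big1 => [|t _]; last first.
      by case: eqP => [|]; [lia | rewrite mulr0].
    by case: eqP => //; lia.
  have lt_s : (s < ((N - k) %/ k).+1)%N by rewrite ltnS leq_divRL //; lia.
  rewrite (bigD1 (Ordinal lt_s)) //= big1 ?addr0.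
    by rewrite (_ : (N - k * (1 + s) = e)%N) ?eqxx ?mulr1 ?add1n //; nia.
  move=> t /eqP ne_ts; case: eqP => [e_eq|]; last by rewrite mulr0.
  case: ne_ts; apply: val_inj => /=; have := ltn_ord t.
  rewrite ltnS leq_divRL // => le_t; apply/eqP; rewrite -(eqn_pmul2r k_gt0).
  by apply/eqP; nia.
rewrite big1 // => t _; case: eqP => e_eq; last by rewrite mulr0.
move: cond; have := ltn_ord t; rewrite ltnS leq_divRL // => le_t.
rewrite (_ : (e <= N)%N) /=; last by lia.
by rewrite (_ : (N - e = (1 + t) * k)%N) ?dvdn_mull //; nia.
Qed.

Theorem mainTheorem9 (k : nat) (F : int -> {poly int}) :
  (2 <= k)%N ->
  F 1 = 1 ->
  (forall n : int, 2 - k%:Z <= n <= 0 -> F n = 0) ->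
  (forall n : int, F n = \sum_(1 <= j < k.+1) 'X^(k - j) * F (n - j%:Z)) ->
  forall n : int, n <= 1 - k%:Z ->
    F n = \sum_(t < ((`|n|%N + 1 - k) %/ k).+1)
            Ck k (- (1 + t)%:Z) (`|n|%N + 1 - k * (1 + t))%N
              *: 'X^(`|n|%N + 1 - k * (1 + t)).
Proof.
move=> k_ge2 F1 F_init F_rec n le_n.
have def_n : n = 1 - (`|n|%N + 1)%:Z.
  by move: le_n; case: n => m le_m; [lia | rewrite NegzE /=; lia].
have le_kN : (k <= `|n| + 1)%N by move: le_n; rewrite {1}def_n; lia.
apply/polyP => e; rewrite {1}def_n (coef_F_neg _ _ k_ge2 F1 F_init F_rec).
by rewrite coef_sum_Ck //; lia.
Qed.
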